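(* Fix $p\in(0,1)$ and $u\in(0,1)$, and let $\Theta_\infty(u)$ be the random variable defined in the context. Then for $k=1,2,\dots$, $$E[\Theta_\infty^k(u)]=\frac{1-p}{1-pu^k-(1-p)(1-u)^k}\sum_{j=0}^{k-1}\binom kj u^{k-j}(1-u)^jE[\Theta_\infty^j(u)].$$
   Context: Let $G_0,G_1,\dots$ be IID random variables with $P(G_0=n)=p^{n-1}(1-p)$ for $n\in\{1,2,\dots\}$, let $T_k=G_0+\dots+G_k$, and define $\Theta_\infty(u)=\sum_{k=0}^\infty u^{T_k}\left(\frac{1-u}{u}\right)^k$. (Its law is the unique probability measure $\mu_u$ on $[0,1]$ with $\mu_u=(1-p)\mu_u\circ S_0^{-1}+p\,\mu_u\circ S_1^{-1}$, where $S_0(x)=u+(1-u)x$, $S_1(x)=ux$.) Here $E[\Theta_\infty^0(u)]=1$. *)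

From HB Require Import structures.
From mathcomp Require Import all_boot all_order all_algebra.
From mathcomp Require Import all_classical all_reals all_analysis.
Set Implicit Arguments. Unset Strict Implicit. Unset Printing Implicit Defensive.
Import Order.TTheory GRing.Theory Num.Theory.
Local Open Scope ring_scope.
Local Open Scope classical_set_scope.

Definition Tsum (T : Type) (G : nat -> T -> nat) (k : nat) (t : T) : nat :=
  (\sum_(i < k.+1) G i t)%N.

Definition Theta (R : realType) (T : Type) (u : R) (G : nat -> T -> nat) (t : T) : R :=
  limn (fun n => \sum_(k < n) (u ^+ Tsum G k t * ((1 - u) / u) ^+ k)).

(* G_0, G_1, ... are IID with P(G_i = n) = p^(n-1) (1-p), n >= 1:
   each G_i takes values in {1,2,...}, the events {G_i = n} are measurable,
   and the joint pmf of (G_0,...,G_n) is the product of geometric pmfs. *)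
Definition iid_geometric (d : measure_display) (T : measurableType d) (R : realType)
  (P : probability T R) (p : R) (G : nat -> T -> nat) : Prop :=
  [/\ (forall i t, (0 < G i t)%N),
      (forall i n, measurable (G i @^-1` [set n]))
    & (forall (n : nat) (v : nat -> nat), (forall i, (0 < v i)%N) ->
        P [set t | forall i, (i <= n)%N -> G i t = v i] =
        (\prod_(i < n.+1) (p ^+ (v i).-1 * (1 - p)))%:E)].

From HB Require Import structures.
From mathcomp Require Import all_boot all_order all_algebra.
From mathcomp Require Import all_classical all_reals all_analysis.
From mathcomp Require Import measurable_realfun ring lra.
Import Order.TTheory GRing.Theory Num.Theory numFieldNormedType.Exports.
Set Implicit Arguments.
Unset Strict Implicit.
Local Open Scope ring_scope.
Local Open Scope classical_set_scope.

(* Splitting off G_0, the partial sums Θ_N = Σ_{k<N} u^{T_k} ((1-u)/u)^k satisfy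
   Θ_{N+1} = u^{G_0 - 1} (u + (1-u) Θ'_N), where Θ'_N is Θ_N built from G_1, G_2, ...,
   hence independent of G_0 and distributed as Θ_N.  Expanding the k-th power and
   using E[u^{k (G_0 - 1)}] = (1-p)/(1 - p u^k) gives
     E[Θ_{N+1}^k] = (1-p)/(1 - p u^k) Σ_{j<=k} C(k,j) u^{k-j} (1-u)^j E[Θ_N^j].
   As 0 <= Θ_N <= 1, dominated convergence lets N tend to infinity; the term j = k
   then contains E[Θ^k] again, and solving for it gives the formula.
   Independence enters only through the joint pmf: expectations of functions of
   G_0, ..., G_(N-1) are computed as iterated series against the geometric weights. *)

Definition vcons (m : nat) (v : nat -> nat) : nat -> nat :=
  fun i => if i is i'.+1 then v i' else m.

Definition update (a : nat -> nat) (j m : nat) : nat -> nat :=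
  fun i => if i == j then m else a i.

Definition splice (a : nat -> nat) (j : nat) (v : nat -> nat) : nat -> nat :=
  fun i => if (i < j)%N then a i else v (i - j)%N.

Definition prefix_dep (U : Type) (F : (nat -> nat) -> U) (n : nat) :=
  forall v w, (forall i, (i < n)%N -> v i = w i) -> F v = F w.

Lemma vcons_head_tail v : vcons (v 0%N) (fun i => v i.+1) = v.
Proof. by apply/funext => -[]. Qed.

Lemma splice0 a v : splice a 0 v = v.
Proof. by apply/funext => i; rewrite /splice ltn0 subn0. Qed.

Lemma splice_update a j m v : splice (update a j m) j.+1 v = splice a j (vcons m v).
Proof.
apply/funext => i; rewrite /splice /update.
case: (ltngtP i j) => [ij|ji|->].
- by rewrite (ltn_trans ij (ltnSn j)).
- by rewrite ltnS leqNgt ji /= -(subnSK ji).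
- by rewrite ltnSn subnn.
Qed.

Section geometric.
Variables (R : realType) (p : R).
Hypotheses (p_ge0 : 0 <= p) (p_le1 : p <= 1).

Definition geom_pmf (m : nat) : R := if m is m'.+1 then p ^+ m' * (1 - p) else 0.

Lemma geom_pmf_ge0 m : 0 <= geom_pmf m.
Proof. by case: m => [|m] //=; rewrite mulr_ge0 ?exprn_ge0 // subr_ge0. Qed.

Lemma geom_pgf x : 0 <= x < 1 ->
  (\sum_(m <oo) (geom_pmf m * x ^+ m.-1)%:E = ((1 - p) / (1 - p * x))%:E)%E.
Proof.
case/andP => x_ge0 x_lt1.
have px_lt1 : `|p * x| < 1.
  by rewrite ger0_norm ?mulr_ge0 // (le_lt_trans _ x_lt1) // ler_piMl.
pose f m := geom_pmf m * x ^+ m.-1.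
have f_cvg : series f @ \oo --> (1 - p) / (1 - p * x).
  have geo_cvg := @cvg_geometric_series _ (1 - p) _ px_lt1.
  rewrite -cvg_shiftS; apply: cvg_trans geo_cvg.
  apply: near_eq_cvg; apply: nearW => n /=.
  rewrite /series /= big_nat_recl //= /f /= mul0r add0r.
  by apply: eq_bigr => i _; rewrite /geometric /= exprMn; ring.
transitivity (limn (EFin \o series f)).
  by congr (limn _); apply/funext => n; rewrite /= /series /= sumEFin.
by rewrite EFin_lim ?(cvg_lim _ f_cvg) //; apply/cvg_ex; exists ((1 - p) / (1 - p * x)).
Qed.

(* [geomE N F] is the expectation of [F (V_0, ..., V_(N-1), 0, 0, ...)] for
   independent geometric V_i, computed as an iterated series. *)
Fixpoint geomE (N : nat) (F : (nat -> nat) -> R) : \bar R :=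
  match N with
  | 0 => (F (fun=> 0%N))%:E
  | N'.+1 => (\sum_(m <oo) ((geom_pmf m)%:E * geomE N' (fun v => F (vcons m v))))%E
  end.

Lemma geomE_ge0 N F : (forall v, 0 <= F v) -> (0 <= geomE N F)%E.
Proof.
elim: N F => [|N IH] F F_ge0 /=; first by rewrite lee_fin.
apply: nneseries_ge0 => m _ _; apply: mule_ge0; first by rewrite lee_fin geom_pmf_ge0.
exact: IH.
Qed.

Lemma geomE_Zl N c F : 0 <= c -> (forall v, 0 <= F v) ->
  geomE N (fun v => c * F v) = (c%:E * geomE N F)%E.
Proof.
move=> c_ge0; elim: N F => [|N IH] F F_ge0 //=.
rewrite -nneseriesZl; last first.
  by move=> m _; rewrite mule_ge0 ?lee_fin ?geom_pmf_ge0 ?geomE_ge0.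
by apply: eq_eseriesr => m _; rewrite IH // muleCA.
Qed.

Lemma geomE_sum N k (F : nat -> (nat -> nat) -> R) : (forall j v, 0 <= F j v) ->
  geomE N (fun v => \sum_(j < k) F j v) = (\sum_(j < k) geomE N (F j))%E.
Proof.
elim: N F => [|N IH] F F_ge0 /=; first by rewrite sumEFin.
have term_ge0 j m : (0 <= (geom_pmf m)%:E * geomE N (fun v => F j (vcons m v)))%E.
  by rewrite mule_ge0 ?lee_fin ?geom_pmf_ge0 ?geomE_ge0.
rewrite -nneseries_sum //; apply: eq_eseriesr => m _.
by rewrite (IH (fun j v => F j (vcons m v))) // ge0_sume_distrr // => j _; rewrite geomE_ge0.
Qed.

Lemma geomE_vcons N F (f : nat -> R) (g : (nat -> nat) -> R) :
  (forall m, 0 <= f m) -> (forall v, 0 <= g v) -> geomE N g \is a fin_num ->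
  (forall m v, (0 < m)%N -> F (vcons m v) = f m * g v) ->
  geomE N.+1 F = ((\sum_(m <oo) (geom_pmf m * f m)%:E) * geomE N g)%E.
Proof.
move=> f_ge0 g_ge0 g_fin Fe /=.
transitivity (\sum_(m <oo) ((geom_pmf m * f m)%:E * geomE N g))%E.
  apply: eq_eseriesr => -[|m] _; first by rewrite /= !mul0r !mul0e.
  under eq_fun do rewrite Fe //.
  by rewrite geomE_Zl // muleA -EFinM.
rewrite -(fineK g_fin) [in RHS]muleC -nneseriesZl.
  by apply: eq_eseriesr => m _; rewrite muleC.
by move=> m _; rewrite lee_fin mulr_ge0 ?geom_pmf_ge0.
Qed.

End geometric.

Definition sample (T : Type) (G : nat -> T -> nat) (t : T) : nat -> nat :=
  fun i => G i t.

Lemma measurable_comp_natvalued d (T : measurableType d) (R : realType)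
    (g : T -> nat) (f : nat -> R) :
  (forall n, measurable (g @^-1` [set n])) -> measurable_fun setT (f \o g).
Proof.
move=> g_meas _ B mB; rewrite setTI.
have -> : (f \o g) @^-1` B = \bigcup_(n in [set n | B (f n)]) g @^-1` [set n].
  by apply/seteqP; split => [t /= Bt|t [n /= Bn] /= ->]; first by exists (g t).
by apply: bigcup_measurable => n _; exact: g_meas.
Qed.

Section prefix_events.
Variables (d : measure_display) (T : measurableType d) (R : realType).
Variables (P : probability T R) (p : R) (G : nat -> T -> nat).
Hypotheses (p_ge0 : 0 <= p) (p_le1 : p <= 1) (G_iid : iid_geometric P p G).

Definition prefix_event (a : nat -> nat) (j : nat) : set T :=
  [set t | forall i, (i < j)%N -> G i t = a i].

Lemma prefix_event0 a : prefix_event a 0 = setT.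
Proof. by apply/seteqP; split. Qed.

Lemma prefix_eventS a j :
  prefix_event a j.+1 = prefix_event a j `&` G j @^-1` [set a j].
Proof.
apply/seteqP; split => [t /= aG|t [/= aG aGj] i].
  by split => [i ij|]; apply: aG => //; exact: ltnW.
by rewrite ltnS leq_eqVlt => /predU1P[->|]; last exact: aG.
Qed.

Lemma measurable_prefix_event a j : measurable (prefix_event a j).
Proof.
elim: j => [|j IH]; first by rewrite prefix_event0.
by rewrite prefix_eventS; apply: measurableI => //; case: G_iid.
Qed.

Lemma prefix_event_prob a j :
  P (prefix_event a j) = (\prod_(i < j) geom_pmf p (a i))%:E.
Proof.
have [G_gt0 _ G_pmf] := G_iid.
have [[i /andP[ij /eqP ai0]]|a_gt0] := pselect (exists i, (i < j)%N && (a i == 0%N)).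
  have -> : prefix_event a j = set0.
    by apply/seteqP; split => // t /= aG; have := G_gt0 i t; rewrite aG // ai0.
  by rewrite measure0 (bigD1 (Ordinal ij)) //= ai0 mul0r.
case: j a_gt0 => [|n] a_gt0; first by rewrite prefix_event0 probability_setT big_ord0.
pose v i := if (i < n.+1)%N then a i else 1%N.
have v_gt0 i : (0 < v i)%N.
  rewrite /v; case: ifPn => // iSn; rewrite lt0n; apply/negP => /eqP ai0.
  by apply: a_gt0; exists i; rewrite iSn ai0.
have -> : prefix_event a n.+1 = [set t | forall i, (i <= n)%N -> G i t = v i].
  apply/seteqP; split => t /= aG i iSn; first by rewrite /v ltnS iSn aG.
  by have := aG i iSn; rewrite /v iSn.
rewrite G_pmf //; congr EFin; apply: eq_bigr => i _.
by have := v_gt0 i; rewrite /v ltn_ord; case: (a i).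
Qed.

Lemma prefix_event_bigcup a j :
  prefix_event a j = \bigcup_m prefix_event (update a j m) j.+1.
Proof.
apply/seteqP; split => [t aG|t [m _ aG] i ij].
  exists (G j t) => //= i; rewrite ltnS leq_eqVlt /update => /predU1P[->|ij].
    by rewrite eqxx.
  by rewrite (ltn_eqF ij); apply: aG.
by have := aG i (ltn_trans ij (ltnSn j)); rewrite /update (ltn_eqF ij).
Qed.

Lemma trivIset_prefix_event a j :
  trivIset setT (fun m => prefix_event (update a j m) j.+1).
Proof.
move=> m m' _ _ [t [/= aG aG']].
by have := aG j (ltnSn j); have := aG' j (ltnSn j); rewrite /update eqxx => <- <-.
Qed.

(* The prefix [a] of length [j] is the generalization needed for the induction on [N]. *)
Lemma integral_prefix_event N j (a : nat -> nat) (F : (nat -> nat) -> R) :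
  prefix_dep F (j + N) -> (forall v, 0 <= F v) ->
  measurable_fun setT (fun t => F (sample G t)) ->
  (\int[P]_(t in prefix_event a j) (F (sample G t))%:E =
   (\prod_(i < j) geom_pmf p (a i))%:E * geomE p N (fun v => F (splice a j v)))%E.
Proof.
elim: N j a F => [|N IH] j a F F_dep F_ge0 F_meas.
  rewrite (@eq_integral _ _ _ _ _ (fun=> (F (splice a j (fun=> 0%N)))%:E)).
    rewrite integral_cst; last exact: measurable_prefix_event.
    by rewrite muleC; congr (_ * _)%E; exact: prefix_event_prob.
  move=> t /[!inE] aG; congr EFin; apply: F_dep => i; rewrite addn0 => ij.
  by rewrite /sample /splice ij aG.
rewrite prefix_event_bigcup ge0_integral_bigcup //; first last.
- exact: trivIset_prefix_event.
- by move=> t _; rewrite lee_fin.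
- by apply/measurable_EFinP; apply: measurable_funS F_meas.
- by move=> m; apply: measurable_prefix_event.
rewrite /= -nneseriesZl; last first.
  by move=> m _; rewrite mule_ge0 ?lee_fin ?geom_pmf_ge0 ?geomE_ge0.
apply: eq_eseriesr => m _; rewrite IH //; last first.
  by move=> v w vw; apply: F_dep => i ij; apply: vw; rewrite addSnnS.
have -> : (fun v => F (splice (update a j m) j.+1 v)) = (fun v => F (splice a j (vcons m v))).
  by apply/funext => v; rewrite splice_update.
rewrite big_ord_recr /= EFinM -muleA /update eqxx.
by congr (_ * _)%E; congr EFin; apply: eq_bigr => i _; rewrite (ltn_eqF (ltn_ord i)).
Qed.

Lemma integral_geomE N (F : (nat -> nat) -> R) :
  prefix_dep F N -> (forall v, 0 <= F v) ->
  measurable_fun setT (fun t => F (sample G t)) ->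
  (\int[P]_t (F (sample G t))%:E = geomE p N F)%E.
Proof.
move=> F_dep F_ge0 F_meas.
have := @integral_prefix_event N 0 (fun=> 0%N) F F_dep F_ge0 F_meas.
rewrite prefix_event0 big_ord0 mul1e => ->.
by congr geomE; apply/funext => v; rewrite splice0.
Qed.

End prefix_events.

Section theta_partial_sums.
Variables (R : realType) (u : R).
Hypotheses (u_gt0 : 0 < u) (u_lt1 : u < 1).

(* [theta_part N (sample G t)] is convertibly the [N]-th partial sum in [Theta u G t]. *)
Definition theta_part (N : nat) (v : nat -> nat) : R :=
  \sum_(k < N) u ^+ (\sum_(i < k.+1) v i)%N * ((1 - u) / u) ^+ k.

Let ratio_ge0 : 0 <= (1 - u) / u.
Proof. by rewrite divr_ge0 ?subr_ge0 ?ltW. Qed.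

Lemma theta_part_ge0 N v : 0 <= theta_part N v.
Proof. by rewrite sumr_ge0 // => k _; rewrite mulr_ge0 ?exprn_ge0 ?ratio_ge0 ?ltW. Qed.

Lemma theta_part_vcons N m v : (0 < m)%N ->
  theta_part N.+1 (vcons m v) = u ^+ m.-1 * (u + (1 - u) * theta_part N v).
Proof.
case: m => // m _; rewrite /theta_part big_ord_recl big_ord1 expr0 mulr1 /=.
rewrite mulrDr -exprSr; congr (_ + _).
rewrite !mulr_sumr; apply: eq_bigr => k _.
rewrite big_ord_recl /bump /=.
have -> : (\sum_(i < 1 + k) v (0 + i) = \sum_(i < k.+1) v i)%N by [].
by rewrite exprS !exprD expr1; field; rewrite gt_eqF.
Qed.

Lemma theta_part_vcons_expr N k m v : (0 < m)%N ->
  theta_part N.+1 (vcons m v) ^+ k = (u ^+ k) ^+ m.-1 *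
    \sum_(j < k.+1) 'C(k, j)%:R * u ^+ (k - j) * (1 - u) ^+ j * theta_part N v ^+ j.
Proof.
move=> m_gt0; rewrite theta_part_vcons // exprMn -!exprM mulnC exprDn.
by congr (_ * _); apply: eq_bigr => j _; rewrite exprMn -mulr_natl; ring.
Qed.

Lemma theta_part_le1 N v : (forall i, (0 < v i)%N) -> theta_part N v <= 1.
Proof.
elim: N v => [|N IH] v v_gt0; first by rewrite /theta_part big_ord0.
rewrite -[v]vcons_head_tail theta_part_vcons //.
have tail_le1 := IH _ (fun i => v_gt0 i.+1).
have tail_ge0 := theta_part_ge0 N (fun i => v i.+1).
have one_minus_u_ge0 : 0 <= 1 - u by rewrite subr_ge0 ltW.
have scaled_ge0 : 0 <= (1 - u) * theta_part N (fun i => v i.+1) by exact: mulr_ge0.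
have scaled_le : (1 - u) * theta_part N (fun i => v i.+1) <= 1 - u by exact: ler_piMr.
apply: mulr_ile1; first exact: exprn_ge0 (ltW u_gt0).
- by rewrite addr_ge0 // ltW.
- exact: exprn_ile1 (ltW u_gt0) (ltW u_lt1).
- by rewrite -lerBrDl.
Qed.

Lemma theta_part_nondecreasing v : nondecreasing_seq (theta_part ^~ v).
Proof.
apply/nondecreasing_seqP => N.
by rewrite /theta_part big_ord_recr /= lerDl mulr_ge0 ?exprn_ge0 ?ratio_ge0 ?ltW.
Qed.

Lemma theta_part_cvg v : (forall i, (0 < v i)%N) ->
  theta_part ^~ v @ \oo --> limn (theta_part ^~ v).
Proof.
move=> v_gt0; apply/cvg_ex; exists (sup (range (theta_part ^~ v))).
apply: nondecreasing_cvgn; first exact: theta_part_nondecreasing.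
by exists 1 => _ [N _ <-]; exact: theta_part_le1.
Qed.

Lemma theta_part_prefix_dep N j : prefix_dep (fun v => theta_part N v ^+ j) N.
Proof.
move=> v w vw; congr (_ ^+ _); apply: eq_bigr => k _; congr (_ ^+ _ * _).
by apply: eq_bigr => i _; apply: vw; exact: leq_trans (ltn_ord i) (ltn_ord k).
Qed.

End theta_partial_sums.

Section moments.
Variables (d : measure_display) (T : measurableType d) (R : realType).
Variables (P : probability T R) (p u : R) (G : nat -> T -> nat).
Hypotheses (p_ge0 : 0 <= p) (p_le1 : p <= 1) (u_gt0 : 0 < u) (u_lt1 : u < 1).
Hypothesis G_iid : iid_geometric P p G.

Let G_gt0 i t : (0 < G i t)%N. Proof. by case: G_iid. Qed.
Let G_meas i n : measurable (G i @^-1` [set n]). Proof. by case: G_iid. Qed.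
Let theta_ge0 N v : 0 <= theta_part u N v. Proof. exact: theta_part_ge0. Qed.

Let theta_expr_ge0_le1 N j t : 0 <= theta_part u N (sample G t) ^+ j <= 1.
Proof.
by rewrite exprn_ge0 ?exprn_ile1 ?theta_part_le1 // => i; exact: G_gt0.
Qed.

Lemma measurable_theta_part N j :
  measurable_fun setT (fun t => theta_part u N (sample G t) ^+ j).
Proof.
apply: measurable_funX; apply: measurable_sum => k.
apply: (@measurable_funM _ _ _ _
  (fun t => u ^+ (\sum_(i < k.+1) G i t)%N) (fun=> ((1 - u) / u) ^+ k)) => //.
rewrite (_ : (fun t => _) = (fun t => \prod_(i < k.+1) u ^+ G i t)).
  by apply: measurable_prod => i _; exact: measurable_comp_natvalued.
by apply/funext => t; rewrite expr_sum.
Qed.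

Lemma integrable_theta_part N j :
  P.-integrable setT (fun t => (theta_part u N (sample G t) ^+ j)%:E).
Proof.
apply: le_integrable (finite_measure_integrable_cst P 1 measurableT) => //.
  by apply/measurable_EFinP; exact: measurable_theta_part.
move=> t _; have /andP[theta_ge0' theta_le1] := theta_expr_ge0_le1 N j t.
by rewrite /= ger0_norm // normr1 lee_fin.
Qed.

Definition moment_part N j := fine (\int[P]_t (theta_part u N (sample G t) ^+ j)%:E).

Lemma integral_theta_part N j :
  (\int[P]_t (theta_part u N (sample G t) ^+ j)%:E = (moment_part N j)%:E)%E.
Proof. by rewrite fineK // (integrable_fin_num measurableT (integrable_theta_part N j)). Qed.

Lemma geomE_theta_part N j :
  geomE p N (fun v => theta_part u N v ^+ j) = (moment_part N j)%:E.
Proof.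
rewrite -integral_theta_part; symmetry; apply: integral_geomE => //.
- exact: theta_part_prefix_dep.
- by move=> v; rewrite exprn_ge0.
- exact: measurable_theta_part.
Qed.

Lemma moment_part_S N k : (0 < k)%N ->
  moment_part N.+1 k = (1 - p) / (1 - p * u ^+ k) *
    \sum_(j < k.+1) 'C(k, j)%:R * u ^+ (k - j) * (1 - u) ^+ j * moment_part N j.
Proof.
move=> k_gt0; pose b j := 'C(k, j)%:R * u ^+ (k - j) * (1 - u) ^+ j.
have b_ge0 j : 0 <= b j.
  by rewrite /b !mulr_ge0 ?ler0n ?exprn_ge0 ?subr_ge0 ?(ltW u_gt0) ?(ltW u_lt1).
have term_ge0 j v : 0 <= b j * theta_part u N v ^+ j by rewrite mulr_ge0 ?exprn_ge0.
pose g v := \sum_(j < k.+1) b j * theta_part u N v ^+ j.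
have geomE_g : geomE p N g = (\sum_(j < k.+1) b j * moment_part N j)%:E.
  rewrite /g (geomE_sum p_ge0 p_le1 N k.+1 term_ge0) //.
  rewrite -sumEFin; apply: eq_bigr => j _.
  by rewrite geomE_Zl ?geomE_theta_part // => v; rewrite exprn_ge0.
have g_ge0 v : 0 <= g v by rewrite sumr_ge0.
have pow_ge0 m : 0 <= (u ^+ k) ^+ m.-1 by rewrite !exprn_ge0 // ltW.
have expand m v : (0 < m)%N -> theta_part u N.+1 (vcons m v) ^+ k = (u ^+ k) ^+ m.-1 * g v.
  exact: theta_part_vcons_expr.
have g_fin : geomE p N g \is a fin_num by rewrite geomE_g.
apply: EFin_inj; rewrite -geomE_theta_part.
rewrite (geomE_vcons p_ge0 p_le1 pow_ge0 g_ge0 g_fin expand) geomE_g.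
by rewrite geom_pgf -?EFinM // exprn_ge0 ?exprn_ilt1 ?ltW // -lt0n.
Qed.

Definition moment j := fine (\int[P]_t (Theta u G t ^+ j)%:E).

Lemma theta_part_dominated j :
  P.-integrable setT (fun t => (Theta u G t ^+ j)%:E) /\
  (fun N => \int[P]_t (theta_part u N (sample G t) ^+ j)%:E)%E @ \oo -->
    (\int[P]_t (Theta u G t ^+ j)%:E)%E.
Proof.
have theta_cvg t :
    (fun N => theta_part u N (sample G t) ^+ j) @ \oo --> Theta u G t ^+ j.
  apply: (@continuous_cvg _ _ _ _ _ (fun N => theta_part u N (sample G t)) (fun x => x ^+ j)).
    exact: exprn_continuous.
  by apply: theta_part_cvg => // i; exact: G_gt0.
have Theta_meas : measurable_fun [set: T] (fun t => (Theta u G t ^+ j)%:E).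
  apply/measurable_EFinP.
  apply: (@measurable_fun_cvg _ _ _ _
    (fun N t => theta_part u N (sample G t) ^+ j)) => [N|t _].
    exact: measurable_theta_part.
  exact: theta_cvg.
have theta_meas N : measurable_fun [set: T] (fun t => (theta_part u N (sample G t) ^+ j)%:E).
  by apply/measurable_EFinP; exact: measurable_theta_part.
have theta_pointwise : {ae P, forall t, setT t ->
    (fun N => (theta_part u N (sample G t) ^+ j)%:E) @ \oo --> (Theta u G t ^+ j)%:E}.
  by apply: aeW => t _; apply/fine_cvgP; split; [exact: nearW | exact: theta_cvg].
have theta_bounded : {ae P, forall t N, setT t ->
    (`|(theta_part u N (sample G t) ^+ j)%:E| <= (EFin \o cst 1%R) t)%E}.
  apply: aeW => t N _; have /andP[theta_ge0' theta_le1] := theta_expr_ge0_le1 N j t.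
  by rewrite abse_EFin lee_fin ger0_norm.
have [integrable_Theta _ integral_cvg] := dominated_convergence measurableT theta_meas Theta_meas
  theta_pointwise (finite_measure_integrable_cst P 1 measurableT) theta_bounded.
by split.
Qed.

Lemma integral_Theta j : (\int[P]_t (Theta u G t ^+ j)%:E = (moment j)%:E)%E.
Proof.
have [integrable_Theta _] := theta_part_dominated j.
by rewrite fineK // (integrable_fin_num measurableT integrable_Theta).
Qed.

Lemma moment_part_cvg j : moment_part ^~ j @ \oo --> moment j.
Proof.
have [_] := theta_part_dominated j.
by rewrite integral_Theta => /fine_cvgP[].
Qed.

Lemma moment_rec k : (0 < k)%N ->
  moment k = (1 - p) / (1 - p * u ^+ k) *
    \sum_(j < k.+1) 'C(k, j)%:R * u ^+ (k - j) * (1 - u) ^+ j * moment j.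
Proof.
move=> k_gt0.
have shift_cvg : (fun N => moment_part N.+1 k) @ \oo --> moment k.
  by rewrite (cvg_shiftS (moment_part ^~ k)); exact: moment_part_cvg.
rewrite -(cvg_lim (@Rhausdorff R) shift_cvg); apply: cvg_lim => //.
rewrite (eq_cvg _ _ (fun N => moment_part_S N k_gt0)).
apply: cvgMl_tmp; apply: cvg_big => [|j _]; first exact: add_continuous.
by apply: cvgMl_tmp; exact: moment_part_cvg.
Qed.

End moments.

Lemma solve_moment_rec (R : realFieldType) (p u : R) (M : nat -> R) k :
  0 < p < 1 -> 0 < u < 1 -> (0 < k)%N ->
  M k = (1 - p) / (1 - p * u ^+ k) *
    \sum_(j < k.+1) 'C(k, j)%:R * u ^+ (k - j) * (1 - u) ^+ j * M j ->
  M k = (1 - p) / (1 - p * u ^+ k - (1 - p) * (1 - u) ^+ k) *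
    \sum_(j < k) 'C(k, j)%:R * u ^+ (k - j) * (1 - u) ^+ j * M j.
Proof.
move=> /andP[p_gt0 p_lt1] /andP[u_gt0 u_lt1] k_gt0.
rewrite big_ord_recr /= binn subnn expr0 !mul1r.
set S := \sum_(j < k) _ => M_rec.
have uk_lt1 : u ^+ k < 1 by rewrite exprn_ilt1 ?ltW // -lt0n.
have puk_lt_p : p * u ^+ k < p by rewrite -[ltRHS]mulr1 ltr_pM2l.
have vk_le1 : (1 - u) ^+ k <= 1 by apply: exprn_ile1; lra.
have pvk_le : (1 - p) * (1 - u) ^+ k <= 1 - p by apply: ler_piMr => //; lra.
have head_neq0 : 1 - p * u ^+ k != 0 by rewrite subr_eq0 eq_sym lt_eqF // (lt_trans puk_lt_p).
have D_neq0 : 1 - p * u ^+ k - (1 - p) * (1 - u) ^+ k != 0 by rewrite gt_eqF //; lra.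
have cleared : (1 - p * u ^+ k) * M k = (1 - p) * (S + (1 - u) ^+ k * M k).
  by rewrite {1}M_rec; field.
apply: (mulfI D_neq0); rewrite [RHS]mulrA mulrCA divff // mulr1 mulrBl cleared; ring.
Qed.

Theorem proposition1 (d : measure_display) (T : measurableType d) (R : realType)
  (P : probability T R) (p u : R) (G : nat -> T -> nat) :
  0 < p < 1 -> 0 < u < 1 -> iid_geometric P p G ->
  forall k : nat, (0 < k)%N ->
  (\int[P]_t ((Theta u G t) ^+ k)%:E =
   ((1 - p) / (1 - p * u ^+ k - (1 - p) * (1 - u) ^+ k))%:E *
   \sum_(j < k) (('C(k, j))%:R * u ^+ (k - j) * (1 - u) ^+ j)%:E *
                 \int[P]_t ((Theta u G t) ^+ j)%:E)%E.
Proof.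
move=> p_itv u_itv G_iid k k_gt0.
have /andP[p_gt0 p_lt1] := p_itv; have /andP[u_gt0 u_lt1] := u_itv.
have integral_Theta_moment j := integral_Theta u_gt0 u_lt1 G_iid j.
rewrite integral_Theta_moment.
under eq_bigr => j _ do rewrite integral_Theta_moment -EFinM.
rewrite sumEFin -EFinM; congr EFin; apply: solve_moment_rec => //.
by apply: moment_rec => //; exact: ltW.
Qed.
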